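(* Let $S$ be a finite $0$-rectangular band with $m$ rows and $n=am$ columns in its non-zero $\mathscr{D}$-class, where $a\ge 1$ is an integer. If $S$ has a permutation matching, then $S$ has an involution matching.
   Context: A finite $0$-rectangular band with $m$ rows and $n$ columns: $S=(R\times C)\cup\{0\}$ with $R=\{1,\dots,m\}$, $C=\{1,\dots,n\}$, and a set $E\subseteq R\times C$ meeting every row and every column; multiplication is $(i,j)(k,l)=(i,l)$ if $(k,j)\in E$ and $0$ otherwise, with $0$ a zero element. Its non-zero $\mathscr{D}$-class is $R\times C$. For $x\in S$, $V(x)=\{y\in S: xyx=x,\ yxy=y\}$. A permutation matching of $S$ is a bijection $\phi:S\to S$ with $\phi(x)\in V(x)$ for all $x\in S$; an involution matching is a permutation matching $\phi$ with $\phi\circ\phi=\mathrm{id}_S$. *)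

From mathcomp Require Import all_boot.
Set Implicit Arguments. Unset Strict Implicit. Unset Printing Implicit Defensive.

(* A 0-rectangular band with rows 'I_m, columns 'I_n and sandwich set E.
   Elements: None = 0, Some (i,j) = the non-zero element (i,j). *)
Definition zrb (m n : nat) : finType := option ('I_m * 'I_n)%type.

Definition zrb_mul (m n : nat) (E : {set 'I_m * 'I_n}) (x y : zrb m n) : zrb m n :=
  match x, y with
  | Some (i, j), Some (k, l) => if (k, j) \in E then Some (i, l) else None
  | _, _ => None
  end.

Definition meets_rows_cols (m n : nat) (E : {set 'I_m * 'I_n}) : Prop :=
  (forall i : 'I_m, exists j : 'I_n, (i, j) \in E) /\
  (forall j : 'I_n, exists i : 'I_m, (i, j) \in E).

Definition inverse_of (m n : nat) (E : {set 'I_m * 'I_n}) (x y : zrb m n) : Prop :=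
  zrb_mul E (zrb_mul E x y) x = x /\ zrb_mul E (zrb_mul E y x) y = y.

Definition permutation_matching (m n : nat) (E : {set 'I_m * 'I_n})
  (phi : zrb m n -> zrb m n) : Prop :=
  bijective phi /\ forall x, inverse_of E x (phi x).

Definition involution_matching (m n : nat) (E : {set 'I_m * 'I_n})
  (phi : zrb m n -> zrb m n) : Prop :=
  permutation_matching E phi /\ forall x, phi (phi x) = x.

From mathcomp Require Import all_boot zify.
Set Implicit Arguments. Unset Strict Implicit. Unset Printing Implicit Defensive.

(* A permutation matching maps the m|B| non-zero elements lying in a set B of
   columns injectively to elements whose row is E-adjacent to some column of B,
   so m|B| <= n |adj_rows B|, i.e. |B| <= a |adj_rows B|.  This is Hall's
   condition for matching the columns with the n = am pairs (row, copy) in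
   which every row is offered, in a copies, to each column adjacent to it.
   Hall's theorem gives a bijection f from columns to such pairs, and
   (i, j) |-> ((f j).1, f^-1 (i, (f j).2)) is then an involution matching. *)

Section HallMarriage.
Variables T1 T2 : finType.
Implicit Types (A B C : {set T1}) (Y : {set T2}) (nb : T1 -> {set T2}).

Definition matching nb A (f : T1 -> T2) :=
  {in A &, injective f} /\ {in A, forall x, f x \in nb x}.

Definition hall_condition nb A :=
  forall B, B \subset A -> #|B| <= #|\bigcup_(x in B) nb x|.

Lemma hall_conditionS nb A B :
  hall_condition nb A -> B \subset A -> hall_condition nb B.
Proof. by move=> hA BA C CB; apply/hA/(subset_trans CB). Qed.

Lemma bigcup_setDl C nb Y :
  \bigcup_(x in C) (nb x :\: Y) = (\bigcup_(x in C) nb x) :\: Y.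
Proof.
apply/setP=> y; rewrite inE; apply/bigcupP/andP.
  by case=> x xC /setDP[yx nY]; split=> //; apply/bigcupP; exists x.
by case=> nY /bigcupP[x xC yx]; exists x; rewrite // inE nY.
Qed.

Lemma matching_glue nb A B Y f1 f2 :
  B \subset A -> matching nb B f1 -> {in B, forall x, f1 x \in Y} ->
  matching (fun x => nb x :\: Y) (A :\: B) f2 ->
  matching nb A (fun x => if x \in B then f1 x else f2 x).
Proof.
move=> BA [inj1 nb1] Y1 [inj2 nb2].
have AB x : x \in A -> x \notin B -> x \in A :\: B by move=> xA xB; rewrite inE xB.
split=> [x1 x2 x1A x2A|x xA]; last first.
  by case: ifP => xB; [apply: nb1 | case/setDP: (nb2 x (AB x xA (negbT xB)))].
case: ifP => x1B; case: ifP => x2B.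
- exact: inj1.
- by move=> e; have /setDP[_] := nb2 x2 (AB x2 x2A (negbT x2B)); rewrite -e Y1.
- by move=> e; have /setDP[_] := nb2 x1 (AB x1 x1A (negbT x1B)); rewrite e Y1.
- by apply: inj2; apply: AB; rewrite ?x1B ?x2B.
Qed.

Lemma hall_condition_tight nb A B :
  hall_condition nb A -> B \subset A -> #|\bigcup_(x in B) nb x| <= #|B| ->
  hall_condition (fun x => nb x :\: \bigcup_(x in B) nb x) (A :\: B).
Proof.
move=> hA BA tightB C CAB; rewrite bigcup_setDl cardsD.
have CB : [disjoint C & B].
  by apply/pred0P=> x /=; apply/andP=> -[/(subsetP CAB)/setDP[_ /negP]].
have := hA (C :|: B); rewrite subUset BA (subset_trans CAB (subsetDl _ _)).
rewrite bigcup_setU cardsU (disjoint_setI0 CB) cards0 subn0 => /(_ isT).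
have := subset_leq_card (subsetIr (\bigcup_(x in C) nb x) (\bigcup_(x in B) nb x)).
rewrite cardsU; lia.
Qed.

Lemma hall_condition_slack nb A x y :
  (forall C, C != set0 -> C \proper A -> #|C| < #|\bigcup_(z in C) nb z|) ->
  x \in A -> hall_condition (fun z => nb z :\ y) (A :\ x).
Proof.
move=> slackA xA C CAx; rewrite bigcup_setDl.
have [->|C0] := eqVneq C set0; first by rewrite cards0.
have CA : C \proper A.
  apply/properP; split; first exact: subset_trans CAx (subsetDl _ _).
  by exists x => //; apply/negP => /(subsetP CAx); rewrite !inE eqxx.
have := slackA C C0 CA; have := cardsD1 y (\bigcup_(z in C) nb z).
case: (y \in _); lia.
Qed.

(* Halmos-Vaughan induction on |A|: either some non-empty proper B is tight,
   and B and A :\: B are matched separately, or every such B has a surplus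
   neighbour, and any edge at x can be used. *)
Lemma hall_matching (y0 : T2) nb A :
  hall_condition nb A -> exists f, matching nb A f.
Proof.
have [k] := ubnP #|A|; elim: k A nb => // k IH A nb ltAk hA.
have [->|[x xA]] := set_0Vmem A; first by exists (fun=> y0); split=> ? ; rewrite inE.
have [B /and3P[B0 BA tightB] | slackA] :=
  pickP [pred B : {set T1} | [&& B != set0, B \proper A & #|\bigcup_(x in B) nb x| <= #|B|]].
- have ltBk : #|B| < k by have := proper_card BA; lia.
  have ltABk : #|A :\: B| < k.
    rewrite cardsDS ?proper_sub //; have := proper_card BA.
    have : 0 < #|B| by rewrite card_gt0.
    lia.
  have [f1 match1] := IH B nb ltBk (hall_conditionS hA (proper_sub BA)).
  have [f2 match2] := IH _ _ ltABk (hall_condition_tight hA (proper_sub BA) tightB).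
  exists (fun x => if x \in B then f1 x else f2 x).
  apply: matching_glue match2 => //; first exact: proper_sub.
  by move=> z zB; apply/bigcupP; exists z => //; apply: match1.2.
- have /card_gt0P[y yx] : 0 < #|nb x|.
    by have := hA [set x]; rewrite sub1set xA big_set1 cards1 => /(_ isT).
  have ltAxk : #|A :\ x| < k by have := cardsD1 x A; rewrite xA; lia.
  have slack : forall C, C != set0 -> C \proper A -> #|C| < #|\bigcup_(z in C) nb z|.
    by move=> C C0 CA; move/negbT: (slackA C); rewrite /= C0 CA ltnNge.
  have [f' match'] := IH _ _ ltAxk (@hall_condition_slack nb A x y slack xA).
  exists (fun z => if z \in [set x] then y else f' z).
  apply: matching_glue match' => //; first by rewrite sub1set.
  + by split=> [? ? /set1P-> /set1P->|z /set1P->].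
  + by move=> ? _; apply: set11.
Qed.
End HallMarriage.

Section ZeroRectangularBand.
Variables (m n : nat) (E : {set 'I_m * 'I_n}).
Implicit Type B : {set 'I_n}.

Lemma inverse_of_Some i j y :
  inverse_of E (Some (i, j)) y <->
  exists k l, y = Some (k, l) /\ (k, j) \in E /\ (i, l) \in E.
Proof.
split=> [|[k [l [-> [kj il]]]]]; last by rewrite /inverse_of /= kj /= il /= kj.
case: y => [[k l]|] [h1 _]; last by [].
by exists k, l; move: h1 => /=; case: ((k, j) \in E) => //=; case: ((i, l) \in E).
Qed.

Definition adj_rows (B : {set 'I_n}) : {set 'I_m} :=
  [set i | [exists j in B, (i, j) \in E]].

Lemma permutation_matching_adj_rows phi B :
  permutation_matching E phi -> m * #|B| <= #|adj_rows B| * n.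
Proof.
move=> [/bij_inj phi_inj phi_inv].
have card_Some (D : {set 'I_m * 'I_n}) : #|[set Some p | p in D]| = #|D|.
  by apply: card_imset => ? ? [].
have <- : #|[set Some p | p in setX [set: 'I_m] B]| = m * #|B|.
  by rewrite card_Some cardsX cardsT card_ord.
have <- : #|[set Some p | p in setX (adj_rows B) [set: 'I_n]]| = #|adj_rows B| * n.
  by rewrite card_Some cardsX cardsT card_ord.
rewrite -(card_imset _ phi_inj).
apply/subset_leq_card/subsetP => _ /imsetP[_ /imsetP[[i j] /setXP[_ jB] ->] ->].
have [k [l [-> [kj _]]]] := (inverse_of_Some i j _).1 (phi_inv (Some (i, j))).
by apply/imsetP; exists (k, l); rewrite // !inE andbT; apply/existsP; exists j; rewrite jB.
Qed.

Variable a : nat.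

Definition column_nb (j : 'I_n) : {set 'I_m * 'I_a} := [set p | (p.1, j) \in E].

Lemma bigcup_column_nb B : \bigcup_(j in B) column_nb j = setX (adj_rows B) setT.
Proof.
apply/setP=> -[i t]; rewrite !inE andbT; apply/bigcupP/existsP.
  by case=> j jB; rewrite inE => ij; exists j; rewrite jB.
by case=> j /andP[jB ij]; exists j; rewrite ?inE.
Qed.

Lemma hall_condition_column_nb :
  0 < m -> n = a * m -> (forall B, m * #|B| <= #|adj_rows B| * n) ->
  hall_condition column_nb setT.
Proof.
move=> m_gt0 n_am bound B _; rewrite bigcup_column_nb cardsX cardsT card_ord.
have := bound B; move: #|B| #|adj_rows B| => b r; rewrite n_am => bound_br.
by rewrite -(leq_pmul2l m_gt0); lia.
Qed.

Definition label_swap (f : 'I_n -> 'I_m * 'I_a) (g : 'I_m * 'I_a -> 'I_n)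
  (x : zrb m n) : zrb m n :=
  if x is Some (i, j) then Some ((f j).1, g (i, (f j).2)) else None.

Lemma label_swap_involution f g :
  cancel f g -> cancel g f -> (forall j, ((f j).1, j) \in E) ->
  involution_matching E (label_swap f g).
Proof.
move=> fK gK fE; have swapK : involutive (label_swap f g).
  by case=> [[i j]|] //=; rewrite gK /= -surjective_pairing fK.
split=> //; split=> [|[[i j]|]]; first by exists (label_swap f g).
- apply/inverse_of_Some; do 2!eexists; split; first by [].
  by split; [apply: fE | have := fE (g (i, (f j).2)); rewrite gK].
- by [].
Qed.

End ZeroRectangularBand.

Theorem proposition2p3 (m n a : nat) (E : {set 'I_m * 'I_n}) :
  (1 <= a)%N -> n = (a * m)%N -> meets_rows_cols E ->
  (exists phi : zrb m n -> zrb m n, permutation_matching E phi) ->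
  exists psi : zrb m n -> zrb m n, involution_matching E psi.
Proof.
move=> a_gt0 n_am _ [phi phi_match].
case: (posnP m) => [m0|m_gt0].
  exists id; split=> //; split=> [|[[i ?]|]]; [by exists id | | by []].
  by exfalso; have := ltn_ord i; lia.
have [f [f_inj f_nb]] := hall_matching (Ordinal m_gt0, Ordinal a_gt0)
  (hall_condition_column_nb m_gt0 n_am (fun B => permutation_matching_adj_rows B phi_match)).
have f_bij : bijective f.
  apply: inj_card_bij; first by move=> ? ?; apply: f_inj; rewrite inE.
  by rewrite card_prod !card_ord n_am mulnC.
have [g fK gK] := f_bij.
exists (label_swap f g); apply: label_swap_involution fK gK _.
by move=> j; have := f_nb j; rewrite !inE => /(_ isT).
Qed.
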